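(* Consider the noisy Hegselmann–Krause model with heterogeneously prejudiced agents described in the context, with noise bound $\delta>0$ and $J_1-J_2>\epsilon+2R$, where $R=\frac{(1-\alpha)\epsilon+\delta}{\alpha}$. Suppose $\max_{i\in\mathcal{S}_1}|x_i(0)-J_1|\le R$ and $\max_{i\in\mathcal{S}_2}|x_i(0)-J_2|\le R$. If almost surely there is a finite (possibly random) time $T$ with $\max_{i\in\mathcal{S}_1}|x_i(T)-J_1|\le\frac{\delta}{\alpha}$, then almost surely $\limsup_{t\to\infty}\max_{i\in\mathcal{S}_1}|x_i(t)-J_1|\le\frac{\delta}{\alpha}$. Likewise, if almost surely there is a finite time $T$ with $\max_{i\in\mathcal{S}_2}|x_i(T)-J_2|\le\frac{\delta}{\alpha}$, then almost surely $\limsup_{t\to\infty}\max_{i\in\mathcal{S}_2}|x_i(t)-J_2|\le\frac{\delta}{\alpha}$.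
   Context: Agents $\mathcal{V}=\{1,\dots,n\}$ with opinions $x_i(t)\in[0,1]$, $t=0,1,2,\dots$. $\mathcal{V}=\mathcal{S}_1\cup\mathcal{S}_2$ with $\mathcal{S}_1\cap\mathcal{S}_2=\emptyset$; agents in $\mathcal{S}_k$ have prejudice value $J_k\in[0,1]$ ($k=1,2$). Confidence bound $\epsilon\in(0,1)$, attraction strength $\alpha\in(0,1]$. Neighbor set $\mathcal{N}_i(x(t))=\{j\in\mathcal{V}:|x_j(t)-x_i(t)|\le\epsilon\}$. For $i\in\mathcal{S}_k$, $x_i^*(t)=(1-\alpha)|\mathcal{N}_i(x(t))|^{-1}\sum_{j\in\mathcal{N}_i(x(t))}x_j(t)+\alpha J_k+\xi_i(t+1)$, and $x_i(t+1)$ equals $1$ if $x_i^*(t)>1$, $x_i^*(t)$ if $x_i^*(t)\in[0,1]$, $0$ if $x_i^*(t)<0$. The noises $\{\xi_i(t)\}_{i\in\mathcal{V},t\ge1}$ are i.i.d. with $E\xi_1(1)=0$, $E\xi_1(1)^2>0$ and $|\xi_1(1)|\le\delta$ almost surely. *)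

From Stdlib Require Import Reals Lra List.
Import ListNotations.
Open Scope R_scope.

(* Agents are the naturals 0..n-1; opinions at one time: y : nat -> R. *)

(* |N_i(y)|: number of j < n with |y j - y i| <= eps (always >= 1, i itself). *)
Definition nbr_count (y : nat -> R) (n i : nat) (eps : R) : R :=
  fold_right (fun j acc => (if Rle_dec (Rabs (y j - y i)) eps then 1 else 0) + acc)
             0 (seq 0 n).

Definition nbr_sum (y : nat -> R) (n i : nat) (eps : R) : R :=
  fold_right (fun j acc => (if Rle_dec (Rabs (y j - y i)) eps then y j else 0) + acc)
             0 (seq 0 n).

Definition nbr_avg (y : nat -> R) (n i : nat) (eps : R) : R :=
  nbr_sum y n i eps / nbr_count y n i eps.

Definition clip01 (z : R) : R := Rmax 0 (Rmin 1 z).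

(* grp i = true  <-> i in S_1 ;  grp i = false <-> i in S_2  (a partition of V). *)
Definition prejudice (grp : nat -> bool) (J1 J2 : R) (i : nat) : R :=
  if grp i then J1 else J2.

Definition HK_traj (n : nat) (grp : nat -> bool) (J1 J2 eps alpha : R)
    (xi : nat -> nat -> R) (x : nat -> nat -> R) : Prop :=
  forall t i, (i < n)%nat ->
    x (S t) i = clip01 ((1 - alpha) * nbr_avg (x t) n i eps
                        + alpha * prejudice grp J1 J2 i + xi (S t) i).

(* Abstract "almost surely": a family of null events that is an ideal
   (closed under subsets and finite unions), as the null sets of any
   probability measure are. *)
Record null_ideal (Omega : Type) (Null : (Omega -> Prop) -> Prop) : Prop := {
  null_mono : forall A B : Omega -> Prop,
      (forall w, A w -> B w) -> Null B -> Null A;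
  null_union : forall A B : Omega -> Prop,
      Null A -> Null B -> Null (fun w => A w \/ B w)
}.

Definition almost_surely {Omega : Type} (Null : (Omega -> Prop) -> Prop)
    (P : Omega -> Prop) : Prop := Null (fun w => ~ P w).

Definition group_dev_le (n : nat) (grp : nat -> bool) (b : bool)
    (y : nat -> R) (J c : R) : Prop :=
  forall i, (i < n)%nat -> grp i = b -> Rabs (y i - J) <= c.

(* limsup_{t->oo} max_{i in S_k} |x t i - J| <= c *)
Definition limsup_group_dev_le (n : nat) (grp : nat -> bool) (b : bool)
    (x : nat -> nat -> R) (J c : R) : Prop :=
  forall eta, 0 < eta -> exists T0 : nat, forall t, (T0 <= t)%nat ->
    group_dev_le n grp b (x t) J (c + eta).

(* Write R = ((1 - alpha) eps + delta) / alpha, so that (1 - alpha)(R + eps) + delta = R.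
   An agent whose neighbours all lie within r of its prejudice J moves, after averaging,
   attraction to J and a noise of size at most delta, to within (1 - alpha) r + delta of J
   (clipping to [0,1] only helps since J lies in [0,1]).  Since every neighbour of an agent
   within R of its prejudice is within R + eps of that prejudice, the R-balls around the
   prejudices are invariant.  Because J1 - J2 > eps + 2R, agents of different groups are
   then never neighbours, so each agent only averages over its own group; hence once a
   group is within delta / alpha = (1 - alpha)(delta / alpha) + delta of its prejudice it
   stays there forever, which gives the limsup bound on every noise-bounded sample path. *)
From Stdlib Require Import Reals Lra Lia List Classical.
Open Scope R_scope.

Lemma Rabs_le_iff (a b : R) : Rabs a <= b <-> - b <= a <= b.
Proof. unfold Rabs; destruct (Rcase_abs a); split; intros; lra. Qed.

Lemma Rabs_clip01_sub (z J : R) : 0 <= J <= 1 -> Rabs (clip01 z - J) <= Rabs (z - J).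
Proof.
  intros HJ. unfold clip01, Rmax, Rmin.
  destruct (Rle_dec 1 z); [destruct (Rle_dec 0 1) | destruct (Rle_dec 0 z)];
    unfold Rabs; repeat destruct Rcase_abs; lra.
Qed.

Lemma Rabs_attract_noise_sub (a J e alpha r delta : R) : 0 <= alpha <= 1 ->
  Rabs (a - J) <= r -> Rabs e <= delta ->
  Rabs ((1 - alpha) * a + alpha * J + e - J) <= (1 - alpha) * r + delta.
Proof.
  intros Halpha Ha He.
  replace ((1 - alpha) * a + alpha * J + e - J) with ((1 - alpha) * (a - J) + e) by ring.
  eapply Rle_trans; [apply Rabs_triang |].
  rewrite Rabs_mult, (Rabs_pos_eq (1 - alpha)) by lra.
  enough ((1 - alpha) * Rabs (a - J) <= (1 - alpha) * r) by lra.
  apply Rmult_le_compat_l; lra.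
Qed.

(* [nbr_sum] and [nbr_count] are these folds over [seq 0 n] centred at [y i]; the
   centre is a separate parameter so that the induction runs over an arbitrary list. *)
Definition nbr_sum_list (y : nat -> R) (yc eps : R) (l : list nat) : R :=
  fold_right (fun j acc => (if Rle_dec (Rabs (y j - yc)) eps then y j else 0) + acc) 0 l.

Definition nbr_count_list (y : nat -> R) (yc eps : R) (l : list nat) : R :=
  fold_right (fun j acc => (if Rle_dec (Rabs (y j - yc)) eps then 1 else 0) + acc) 0 l.

Lemma nbr_count_list_ge0 (y : nat -> R) (yc eps : R) (l : list nat) :
  0 <= nbr_count_list y yc eps l.
Proof. induction l as [| j l IH]; simpl; [lra | destruct Rle_dec; lra]. Qed.

Lemma nbr_count_list_ge1 (y : nat -> R) (eps : R) (l : list nat) (i : nat) :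
  0 <= eps -> In i l -> 1 <= nbr_count_list y (y i) eps l.
Proof.
  intros Heps Hi. induction l as [| j l IH]; simpl in Hi |- *; [contradiction |].
  pose proof (nbr_count_list_ge0 y (y i) eps l).
  destruct Hi as [<- | Hi].
  - destruct Rle_dec as [| Hfar]; [lra |].
    exfalso; apply Hfar; rewrite Rminus_diag, Rabs_R0; lra.
  - specialize (IH Hi). destruct Rle_dec; lra.
Qed.

Lemma nbr_sum_list_between (y : nat -> R) (yc eps c r : R) (l : list nat) :
  (forall j, In j l -> Rabs (y j - yc) <= eps -> Rabs (y j - c) <= r) ->
  (c - r) * nbr_count_list y yc eps l <= nbr_sum_list y yc eps l
    <= (c + r) * nbr_count_list y yc eps l.
Proof.
  induction l as [| j l IH]; intros Hclose; simpl; [lra |].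
  fold (nbr_sum_list y yc eps l) (nbr_count_list y yc eps l).
  assert (IHl := IH (fun k Hk => Hclose k (or_intror Hk))).
  destruct Rle_dec as [Hnear |]; [| lra].
  assert (Hj := Hclose j (or_introl eq_refl) Hnear).
  apply Rabs_le_iff in Hj; lra.
Qed.

Lemma nbr_avg_dev (y : nat -> R) (n i : nat) (eps c r : R) :
  (i < n)%nat -> 0 <= eps ->
  (forall j, (j < n)%nat -> Rabs (y j - y i) <= eps -> Rabs (y j - c) <= r) ->
  Rabs (nbr_avg y n i eps - c) <= r.
Proof.
  intros Hi Heps Hclose. unfold nbr_avg.
  change (nbr_sum y n i eps) with (nbr_sum_list y (y i) eps (seq 0 n)).
  change (nbr_count y n i eps) with (nbr_count_list y (y i) eps (seq 0 n)).
  assert (HC : 1 <= nbr_count_list y (y i) eps (seq 0 n))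
    by (apply nbr_count_list_ge1; [exact Heps | apply in_seq; lia]).
  assert (HS := nbr_sum_list_between y (y i) eps c r (seq 0 n)
                  (fun j Hj => Hclose j (proj2 (proj1 (in_seq _ _ _) Hj)))).
  set (S := nbr_sum_list _ _ _ _) in *; set (C := nbr_count_list _ _ _ _) in *.
  apply Rabs_le_iff.
  replace (S / C - c) with ((S - c * C) / C) by (field; lra).
  split; apply (Rmult_le_reg_r C); try lra;
    replace ((S - c * C) / C * C) with (S - c * C) by (field; lra); lra.
Qed.

Section NoisyPath.

Variables (n : nat) (grp : nat -> bool) (J1 J2 eps alpha delta : R).
Variables (xi : nat -> nat -> R) (x : nat -> nat -> R).

Hypothesis Heps : 0 <= eps.
Hypothesis Halpha : 0 < alpha <= 1.
Hypothesis HJ1 : 0 <= J1 <= 1.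
Hypothesis HJ2 : 0 <= J2 <= 1.
Hypothesis Hdyn : HK_traj n grp J1 J2 eps alpha xi x.
Hypothesis Hnoise : forall t i, (1 <= t)%nat -> (i < n)%nat -> Rabs (xi t i) <= delta.

Let J := prejudice grp J1 J2.

Lemma HK_step_dev (t i : nat) (r : R) : (i < n)%nat ->
  (forall j, (j < n)%nat -> Rabs (x t j - x t i) <= eps -> Rabs (x t j - J i) <= r) ->
  Rabs (x (S t) i - J i) <= (1 - alpha) * r + delta.
Proof.
  intros Hi Hnbrs. rewrite (Hdyn t i Hi).
  eapply Rle_trans; [apply Rabs_clip01_sub; unfold J, prejudice; destruct (grp i); lra |].
  apply Rabs_attract_noise_sub; [lra | | apply Hnoise; lia].
  now apply nbr_avg_dev.
Qed.

Let R0 := ((1 - alpha) * eps + delta) / alpha.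

Hypothesis Hinit : forall i, (i < n)%nat -> Rabs (x 0%nat i - J i) <= R0.

Lemma HK_dev_le_R0 (t i : nat) : (i < n)%nat -> Rabs (x t i - J i) <= R0.
Proof.
  revert i; induction t as [| t IH]; intros i Hi; [now apply Hinit |].
  replace R0 with ((1 - alpha) * (R0 + eps) + delta) by (unfold R0; field; lra).
  apply HK_step_dev; [exact Hi |].
  intros j _ Hji. specialize (IH i Hi).
  apply Rabs_le_iff in Hji, IH. apply Rabs_le_iff; lra.
Qed.

Hypothesis HJsep : J1 - J2 > eps + 2 * R0.

Lemma HK_neighbour_same_group (t i j : nat) : (i < n)%nat -> (j < n)%nat ->
  Rabs (x t j - x t i) <= eps -> grp j = grp i.
Proof.
  intros Hi Hj Hji.
  assert (Hdi := HK_dev_le_R0 t i Hi); assert (Hdj := HK_dev_le_R0 t j Hj).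
  unfold J, prejudice in Hdi, Hdj.
  apply Rabs_le_iff in Hji, Hdi, Hdj.
  destruct (grp i), (grp j); auto; lra.
Qed.

Lemma HK_group_dev_absorbing (b : bool) (T t : nat) : (T <= t)%nat ->
  group_dev_le n grp b (x T) (if b then J1 else J2) (delta / alpha) ->
  group_dev_le n grp b (x t) (if b then J1 else J2) (delta / alpha).
Proof.
  intros HTt HT. induction HTt as [| t _ IH]; [exact HT |].
  intros i Hi Hgi.
  assert (HJi : J i = if b then J1 else J2) by (unfold J, prejudice; now rewrite Hgi).
  rewrite <- HJi.
  replace (delta / alpha) with ((1 - alpha) * (delta / alpha) + delta) by (field; lra).
  apply HK_step_dev; [exact Hi |].
  intros j Hj Hji. rewrite HJi.
  apply IH; [exact Hj |].
  rewrite (HK_neighbour_same_group t i j Hi Hj Hji); exact Hgi.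
Qed.

End NoisyPath.

Lemma limsup_group_dev_le_of_eventually (n : nat) (grp : nat -> bool) (b : bool)
    (x : nat -> nat -> R) (J c : R) :
  (exists T0, forall t, (T0 <= t)%nat -> group_dev_le n grp b (x t) J c) ->
  limsup_group_dev_le n grp b x J c.
Proof.
  intros [T0 HT0] eta Heta. exists T0. intros t Ht i Hi Hgi.
  assert (H := HT0 t Ht i Hi Hgi); lra.
Qed.

Lemma almost_surely_conj_imp (Omega : Type) (Null : (Omega -> Prop) -> Prop)
    (P Q S : Omega -> Prop) :
  null_ideal Omega Null -> (forall w, P w -> Q w -> S w) ->
  almost_surely Null P -> almost_surely Null Q -> almost_surely Null S.
Proof.
  intros HNull HPQS HP HQ.
  apply (null_mono _ _ HNull _ (fun w => ~ P w \/ ~ Q w)); [| now apply null_union].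
  intros w HS. apply not_and_or. intros [HPw HQw]. exact (HS (HPQS w HPw HQw)).
Qed.

Theorem lemma4
  (Omega : Type) (Null : (Omega -> Prop) -> Prop) (HNull : null_ideal Omega Null)
  (n : nat) (grp : nat -> bool) (J1 J2 eps alpha delta : R)
  (Heps : 0 < eps < 1) (Halpha : 0 < alpha <= 1)
  (HJ1 : 0 <= J1 <= 1) (HJ2 : 0 <= J2 <= 1) (Hdelta : 0 < delta)
  (xi : Omega -> nat -> nat -> R) (x0 : nat -> R)
  (x : Omega -> nat -> nat -> R)
  (Hx0range : forall i, (i < n)%nat -> 0 <= x0 i <= 1)
  (Hinit : forall w i, x w 0%nat i = x0 i)
  (Hdyn : forall w, HK_traj n grp J1 J2 eps alpha (xi w) (x w))
  (Hnoise : almost_surely Null (fun w => forall t i, (1 <= t)%nat -> (i < n)%nat ->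
                                  Rabs (xi w t i) <= delta))
  (HJsep : J1 - J2 > eps + 2 * (((1 - alpha) * eps + delta) / alpha))
  (H1init : group_dev_le n grp true x0 J1 (((1 - alpha) * eps + delta) / alpha))
  (H2init : group_dev_le n grp false x0 J2 (((1 - alpha) * eps + delta) / alpha)) :
  (almost_surely Null (fun w => exists T : nat,
       group_dev_le n grp true (x w T) J1 (delta / alpha)) ->
   almost_surely Null (fun w =>
       limsup_group_dev_le n grp true (x w) J1 (delta / alpha)))
  /\
  (almost_surely Null (fun w => exists T : nat,
       group_dev_le n grp false (x w T) J2 (delta / alpha)) ->
   almost_surely Null (fun w =>
       limsup_group_dev_le n grp false (x w) J2 (delta / alpha))).
Proof.
  assert (Hinit_dev : forall w i, (i < n)%nat ->
            Rabs (x w 0%nat i - prejudice grp J1 J2 i)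
              <= ((1 - alpha) * eps + delta) / alpha).
  { intros w i Hi. rewrite Hinit. unfold prejudice.
    destruct (grp i) eqn:Hgi; [now apply H1init | now apply H2init]. }
  assert (Hgroup : forall b : bool,
    almost_surely Null (fun w => exists T : nat,
       group_dev_le n grp b (x w T) (if b then J1 else J2) (delta / alpha)) ->
    almost_surely Null (fun w =>
       limsup_group_dev_le n grp b (x w) (if b then J1 else J2) (delta / alpha))).
  { intros b Hreach. eapply (almost_surely_conj_imp _ _ _ _ _ HNull); [| exact Hreach | exact Hnoise].
    intros w [T HT] Hnoise_w. apply limsup_group_dev_le_of_eventually.
    exists T; intros t HTt.
    exact (HK_group_dev_absorbing n grp J1 J2 eps alpha delta (xi w) (x w) ltac:(lra)
             Halpha HJ1 HJ2 (Hdyn w) Hnoise_w (Hinit_dev w) HJsep b T t HTt HT). }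
  split; [exact (Hgroup true) | exact (Hgroup false)].
Qed.
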